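(* Let $A$ be a commutative unital Banach algebra with unit $1_A$, let $x,y\in A$ be quasinilpotent, and let $\lambda\in\mathbb{C}$. (i) If $\lambda\notin\pi\mathbb{Z}$ and $\cos(\lambda 1_A+x)=\cos(\lambda 1_A+y)$, then $x=y$. (ii) If $\lambda\in\pi\mathbb{Z}$ and $\cos(\lambda 1_A+x)=\cos(\lambda 1_A+y)$, then $x^2=y^2$.
   Context: For $z\in A$, $\cos(z)=\sum_{n=0}^\infty(-1)^n\frac{z^{2n}}{(2n)!}$. An element $x$ is quasinilpotent if $\lim_{n\to\infty}\Vert x^n\Vert^{1/n}=0$. *)

From HB Require Import structures.
From mathcomp Require Import all_boot all_order all_algebra.
From mathcomp Require Import all_classical all_reals all_analysis.
From mathcomp Require Import complex.
Import Order.TTheory GRing.Theory Num.Theory.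
Import numFieldNormedType.Exports.
Set Implicit Arguments. Unset Strict Implicit. Unset Printing Implicit Defensive.
Local Open Scope ring_scope.
Local Open Scope classical_set_scope.

Definition cmod (R : realType) (a : R[i]) : R := Normc.normc a.

Definition ncvg (R : realType) (A : zmodType) (nrm : A -> R)
    (u : nat -> A) (l : A) : Prop :=
  (fun n => nrm (u n - l)) @ \oo --> (0 : R).

Definition ncauchy (R : realType) (A : zmodType) (nrm : A -> R) (u : nat -> A) : Prop :=
  forall e : R, 0 < e -> exists N : nat,
    forall m n : nat, (N <= m)%N -> (N <= n)%N -> nrm (u m - u n) < e.

(* nrm makes the commutative unital complex algebra A (unit 1 <> 0, which is
   part of comAlgType) a commutative unital Banach algebra:
   nrm is a norm, it is submultiplicative, and A is complete for it. *)
Record banach_algebra_norm (R : realType) (A : comAlgType R[i]) (nrm : A -> R) : Prop := {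
  ban_eq0   : forall x : A, nrm x = 0 -> x = 0;
  ban_triangle : forall x y : A, nrm (x + y) <= nrm x + nrm y;
  ban_scale : forall (a : R[i]) (x : A), nrm (a *: x) = cmod a * nrm x;
  ban_submult : forall x y : A, nrm (x * y) <= nrm x * nrm y;
  ban_complete : forall u : nat -> A, ncauchy nrm u -> exists l : A, ncvg nrm u l
}.

(* cos z = sum_{n>=0} (-1)^n z^(2n) / (2n)! : the (norm-)limit of the
   partial sums (this series always converges in a Banach algebra; the
   limit is unique, so the choice below is the sum). *)
Definition cosA (R : realType) (A : comAlgType R[i]) (nrm : A -> R) (z : A) : A :=
  xget 0 [set s | ncvg nrm
     (series (fun n : nat => (((-1) ^+ n) / ((2 * n)`!)%:R : R[i]) *: z ^+ (2 * n))) s].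

Definition quasinilpotent (R : realType) (A : comAlgType R[i]) (nrm : A -> R) (x : A) : Prop :=
  (fun n : nat => powR (nrm (x ^+ n)) (n%:R^-1)) @ \oo --> (0 : R).

From HB Require Import structures.
From mathcomp Require Import all_boot all_order all_algebra.
From mathcomp Require Import all_classical all_reals all_analysis.
From mathcomp Require Import complex.
From mathcomp Require Import ring lra.
Set Implicit Arguments. Unset Strict Implicit. Unset Printing Implicit Defensive.
Import Order.TTheory GRing.Theory Num.Theory.
Import numFieldNormedType.Exports.
Local Open Scope ring_scope.
Local Open Scope classical_set_scope.

(* Write x = p + q and y = p - q with p = (x + y)/2 and q = (x - y)/2, and put
   S z = e^{iz} - e^{-iz} (that is, 2i sin z), the exponential being the power series
   in A.  Since e^{a + b} = e^a e^b, we get cos (a + b) - cos (a - b) = S a S b / 2, so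
   the hypothesis reads S (lambda + p) S q = 0.  Expanding the exponential series,
   S z = z (2i + z w), while S (lambda + p) = (e^{i lambda} - e^{-i lambda}) + p w'
   and, when lambda is in pi Z, S (lambda + p) = e^{i lambda} S p.  In both cases the
   equation takes the form d (c + z) = 0 with c a nonzero scalar and z in the ideal
   generated by x and y, where d = q in case (i) and d = p q = (x^2 - y^2)/4 in
   case (ii).  Such an equation forces d = 0: d = d (-z/c)^n for every n, and because
   x and y are quasinilpotent and commute, the norm of (x a + y b)^n is eventually
   smaller than any geometric sequence. *)

Section ComplexModulus.
Variable R : realType.
Implicit Types a b : R[i].

Lemma cmodM a b : cmod (a * b) = cmod a * cmod b.
Proof. exact: Normc.normcM. Qed.

Lemma cmodN a : cmod (- a) = cmod a.
Proof. exact: normcN. Qed.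

Lemma cmod0 : cmod (0 : R[i]) = 0.
Proof. exact: Normc.normc0. Qed.

Lemma cmod1 : cmod (1 : R[i]) = 1.
Proof. exact: Normc.normc1. Qed.

Lemma cmod_natV n : cmod (n%:R^-1 : R[i]) = n%:R^-1.
Proof.
have -> : (n%:R : R[i]) = ((n%:R : R)%:C)%C by rewrite rmorph_nat.
rewrite /cmod Normc.normcV.
by rewrite /Normc.normc /= expr0n addr0 sqrtr_sqr normr_nat.
Qed.

Lemma cmod_le_ReIm a : cmod a <= `|complex.Re a| + `|complex.Im a|.
Proof.
case: a => x y; rewrite /cmod /Normc.normc /=.
have h0 : 0 <= `|x| + `|y| by rewrite addr_ge0.
rewrite -[X in _ <= X](ger0_norm h0) -sqrtr_sqr ler_sqrt ?sqr_ge0 //.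
rewrite sqrrD -[x ^+ 2]real_normK ?num_real // -[y ^+ 2]real_normK ?num_real //.
by rewrite -addrA lerD2l lerDr mulrn_wge0 // mulr_ge0.
Qed.

End ComplexModulus.

Section Trigonometry.
Variable R : realType.

Lemma sin_pi_int (k : int) : sin (pi * k%:~R) = 0 :> R.
Proof.
have sin_pi_nat n : sin (pi * n%:R) = 0 :> R.
  by rewrite mulr_natr -[pi *+ n]add0r (alternatingn (@sinDpi R)) sin0 mulr0.
case: k => n; first exact: sin_pi_nat.
by rewrite NegzE mulrNz mulrN sinN -pmulrn sin_pi_nat oppr0.
Qed.

Lemma sin_eq0_nat (a : R) : 0 <= a -> sin a = 0 -> exists m : nat, a = pi * m%:R.
Proof.
move=> a0 sa; have pi0 : 0 < pi :> R := pi_gt0 R.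
pose m := Num.Def.trunc (a / pi); exists m.
have /andP[lo hi] : m%:R <= a / pi < m.+1%:R.
  by apply: truncn_itv; rewrite divr_ge0 // ltW.
rewrite ler_pdivlMr // in lo; rewrite ltr_pdivrMr // in hi.
pose s := a - pi *+ m.
have s_sin0 : sin s = 0.
  have := alternatingn (@sinDpi R) m s; rewrite /s subrK sa => /esym/eqP.
  by rewrite mulf_eq0 signr_eq0 => /eqP.
have s_ge0 : 0 <= s by rewrite /s -mulr_natl; lra.
have s_ltpi : s < pi by rewrite /s -mulr_natl; rewrite mulrSr in hi; lra.
have s0 : s = 0.
  apply/eqP; rewrite eq_le s_ge0 andbT leNgt; apply/negP => s_gt0.
  by have := sin_gt0_pi (andb_true_intro (conj s_gt0 s_ltpi)); rewrite s_sin0 ltxx.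
by apply/eqP; rewrite mulr_natr -subr_eq0 -/s s0.
Qed.

Lemma sin_eq0_int (a : R) : sin a = 0 -> exists k : int, a = pi * k%:~R.
Proof.
move=> sa; have [a0|a0] := leP 0 a.
  by have [m ->] := sin_eq0_nat a0 sa; exists m%:Z.
have na0 : 0 <= - a by rewrite oppr_ge0 ltW.
have sna : sin (- a) = 0 by rewrite sinN sa oppr0.
have [m hm] := sin_eq0_nat na0 sna.
by exists (- m%:Z); rewrite mulrNz mulrN -hm opprK.
Qed.

End Trigonometry.

Section ComplexExponential.
Variable R : realType.

Definition cexp (c : R[i]) : R[i] :=
  ((expR (complex.Re c))%:C)%C * (cos (complex.Im c) +i* sin (complex.Im c))%C.

Lemma cexp_iN_eq (l : R[i]) :
  cexp ('i%C * l) = cexp (- ('i%C * l)) <-> exists k : int, l = ((pi * k%:~R : R)%:C)%C.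
Proof.
case: l => a b.
have -> : 'i%C * (a +i* b)%C = (- b +i* a)%C by simpc.
rewrite /cexp /= opprK cosN sinN.
split; last first.
  by case=> k [-> ->]; rewrite sin_pi_int oppr0.
have prod (r c s : R) : ((r%:C)%C * (c +i* s)%C) = ((r * c) +i* (r * s))%C by simpc.
rewrite !prod => -[e_cos e_sin].
have E1 := expR_gt0 (- b); have E2 := expR_gt0 b.
have sa : sin a = 0.
  have : (expR (- b) + expR b) * sin a = 0 by rewrite mulrDl e_sin mulrN addNr.
  by move/eqP; rewrite mulf_eq0 => /orP[/eqP|/eqP //]; lra.
have ca : cos a != 0.
  apply/eqP => c0; have := cos2Dsin2 a; rewrite c0 sa expr0n addr0 => /eqP.
  by rewrite eq_sym oner_eq0.
have /expR_inj b0 : expR (- b) = expR b by apply: (mulIf ca).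
have [k ->] := sin_eq0_int sa.
by exists k; congr (_ +i* _)%C; lra.
Qed.

Lemma cexp_neq0 c : cexp c != 0.
Proof.
rewrite mulf_neq0 //; first by rewrite fmorph_eq0 gt_eqF ?expR_gt0.
apply/eqP => -[c0 s0]; have := cos2Dsin2 (complex.Im c).
by rewrite c0 s0 expr0n addr0 => /eqP; rewrite eq_sym oner_eq0.
Qed.

Lemma exp_coeff_i (r : R) k :
  (k`!%:R^-1 : R[i]) * ('i%C * (r%:C)%C) ^+ k =
  ((cos_coeff r k)%:C)%C + 'i%C * ((sin_coeff r k)%:C)%C.
Proof.
have i_even m : ('i%C : R[i]) ^+ m.*2 = (((-1) ^+ m : R)%:C)%C.
  by rewrite -mul2n exprM sqr_i rmorphXn rmorphN1.
rewrite -[k]odd_double_half; case: (odd k); rewrite ?add1n ?add0n.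
  rewrite cos_coeff_odd rmorph0 add0r -sin_coeff'E /sin_coeff'.
  rewrite exprMn exprS i_even !rmorphM !rmorphXn fmorphV rmorph_nat rmorphN1.
  by ring.
rewrite -cos_coeff'E sin_coeff_even rmorph0 mulr0 addr0 /cos_coeff'.
rewrite exprMn i_even !rmorphM !rmorphXn fmorphV rmorph_nat rmorphN1.
by ring.
Qed.

Lemma twoi_neq0 : 2 * 'i%C != 0 :> R[i].
Proof.
by rewrite mulf_neq0 ?pnatr_eq0 //; apply/eqP; case; apply/eqP; rewrite oner_eq0.
Qed.

End ComplexExponential.

Lemma sum_triangle (V : zmodType) (g : nat -> nat -> V) N :
  \sum_(0 <= n < N) \sum_(0 <= i < n.+1) g i (n - i)%N =
  \sum_(0 <= i < N) \sum_(0 <= j < N - i) g i j.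
Proof.
elim: N => [|N ih]; first by rewrite !big_geq.
rewrite big_nat_recr //= ih [in RHS]big_nat_recr //= subSnn big_nat1.
rewrite [\sum_(0 <= i < N.+1) g i (N - i)%N]big_nat_recr //= subnn.
have -> : \sum_(0 <= i < N) \sum_(0 <= j < N.+1 - i) g i j =
    \sum_(0 <= i < N) \sum_(0 <= j < N - i) g i j +
    \sum_(0 <= i < N) g i (N - i)%N.
  rewrite -big_split; apply: eq_big_nat => i /andP[_ iN] /=.
  by rewrite subSn ?(ltnW iN) // big_nat_recr.
by rewrite !addrA.
Qed.

Lemma invfact_bin (F : numFieldType) n i : (i <= n)%N ->
  (n`!%:R^-1 : F) * 'C(n, i)%:R = i`!%:R^-1 * (n - i)`!%:R^-1.
Proof.
move=> ni; rewrite -(bin_fact ni) !natrM.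
have h1 : ('C(n, i)%:R : F) != 0 by rewrite pnatr_eq0 -lt0n bin_gt0.
have h2 : (i`!%:R : F) != 0 by rewrite pnatr_eq0 -lt0n fact_gt0.
have h3 : ((n - i)`!%:R : F) != 0 by rewrite pnatr_eq0 -lt0n fact_gt0.
by field; rewrite h1 h2 h3.
Qed.

Lemma half_sum_diff (F : numFieldType) (V : lmodType F) (x y : V) :
  x = 2^-1 *: (x + y) + 2^-1 *: (x - y) /\ y = 2^-1 *: (x + y) - 2^-1 *: (x - y).
Proof.
have sum2 : x + y + (x - y) = 2%:R *: x.
  by rewrite scaler_nat mulr2n addrACA subrr addr0.
have diff2 : x + y - (x - y) = 2%:R *: y.
  by rewrite scaler_nat mulr2n opprB addrC addrA subrK.
by rewrite -scalerDr -scalerBr sum2 diff2 !scalerA mulVf ?pnatr_eq0 // !scale1r.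
Qed.

Lemma alg_mul (K : pzRingType) (L : lalgType K) (a b : K) :
  (a * b)%:A = a%:A * b%:A :> L.
Proof. by rewrite mulr_algl scalerA. Qed.

Lemma le_mul_halfX_eq0 (R : archiRealFieldType) (c K : R) :
  0 <= c -> (forall n, c <= c * (K * 2^-1 ^+ n)) -> c = 0.
Proof.
move=> c0 hc; pose n := Num.Def.archi_bound K.
have lt1 : K * 2^-1 ^+ n < 1.
  by rewrite exprVn ltr_pdivrMr ?exprn_gt0 // mul1r upper_nthrootP.
apply/eqP; rewrite eq_le c0 andbT.
have : c * (1 - K * 2^-1 ^+ n) <= 0 by rewrite mulrBr mulr1 subr_le0.
by rewrite pmulr_lle0 // subr_gt0.
Qed.

Section ExponentialSeries.
Variables (F : numFieldType) (B : comAlgType F).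

Definition exp_term (z : B) (k : nat) : B := (k`!%:R^-1 : F) *: z ^+ k.

Lemma exp_termN (w : B) k : exp_term (- w) k = (-1) ^+ k *: exp_term w k.
Proof. by rewrite /exp_term -scaleN1r exprZn !scalerA mulrC. Qed.

Lemma exp_series_mul_sub (a b : B) N :
  series (exp_term b) N * series (exp_term a) N - series (exp_term (a + b)) N =
  \sum_(0 <= i < N) \sum_(N - i <= j < N)
    ((i`!%:R^-1 * j`!%:R^-1 : F) *: (a ^+ j * b ^+ i)).
Proof.
pose g i j := (i`!%:R^-1 * j`!%:R^-1 : F) *: (a ^+ j * b ^+ i).
have square : series (exp_term b) N * series (exp_term a) N =
    \sum_(0 <= i < N) \sum_(0 <= j < N) g i j.
  rewrite /series /= mulr_suml; apply: eq_bigr => i _.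
  rewrite mulr_sumr; apply: eq_bigr => j _.
  by rewrite /g -scalerAl -scalerAr scalerA mulrC [b ^+ i * _]mulrC.
have triangle : series (exp_term (a + b)) N =
    \sum_(0 <= n < N) \sum_(0 <= i < n.+1) g i (n - i)%N.
  rewrite /series /=; apply: eq_bigr => n _.
  rewrite /exp_term exprDn scaler_sumr big_mkord; apply: eq_bigr => i _.
  by rewrite -[_ *+ 'C(n, i)]scaler_nat scalerA invfact_bin // -ltnS.
rewrite square triangle sum_triangle.
have -> : \sum_(0 <= i < N) \sum_(0 <= j < N) g i j =
    \sum_(0 <= i < N) \sum_(0 <= j < N - i) g i j +
    \sum_(0 <= i < N) \sum_(N - i <= j < N) g i j.
  by rewrite -big_split /=; apply: eq_bigr => i _; rewrite -big_cat_nat // leq_subr.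
by rewrite addrC addKr.
Qed.

End ExponentialSeries.

Section BanachAlgebra.
Variables (R : realType) (A : comAlgType R[i]) (nrm : A -> R).
Hypothesis hA : banach_algebra_norm nrm.

Lemma nrmZ (a : R[i]) x : nrm (a *: x) = cmod a * nrm x.
Proof. exact: ban_scale. Qed.

Lemma nrmD x y : nrm (x + y) <= nrm x + nrm y.
Proof. exact: ban_triangle. Qed.

Lemma nrmM x y : nrm (x * y) <= nrm x * nrm y.
Proof. exact: ban_submult. Qed.

Lemma nrm0 : nrm 0 = 0.
Proof. by rewrite -(scale0r (0 : A)) nrmZ cmod0 mul0r. Qed.

Lemma nrmN x : nrm (- x) = nrm x.
Proof. by rewrite -scaleN1r nrmZ cmodN cmod1 mul1r. Qed.

Lemma nrm_ge0 x : 0 <= nrm x.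
Proof.
have := nrmD x (- x); rewrite subrr nrm0 nrmN => h.
by rewrite -(@pmulr_rge0 _ 2) // mulr2n mulrDl mul1r.
Qed.

Lemma nrm_sum (I : Type) (r : seq I) (P : pred I) (F : I -> A) :
  nrm (\sum_(i <- r | P i) F i) <= \sum_(i <- r | P i) nrm (F i).
Proof.
elim/big_ind2: _ => [|a b c d h1 h2|//]; first by rewrite nrm0.
exact: le_trans (nrmD _ _) (lerD h1 h2).
Qed.

Lemma nrmMn x n : nrm (x *+ n) <= nrm x *+ n.
Proof.
elim: n => [|n ih]; first by rewrite !mulr0n nrm0.
by rewrite !mulrS; apply: le_trans (nrmD _ _) (lerD _ ih).
Qed.

Lemma nrmX x n : nrm (x ^+ n) <= nrm 1 * nrm x ^+ n.
Proof.
elim: n => [|n ih]; first by rewrite !expr0 mulr1.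
rewrite exprSr; apply: le_trans (nrmM _ _) _.
by rewrite exprSr mulrA ler_wpM2r ?nrm_ge0.
Qed.

Lemma ncvg_le u l (f : nat -> R) :
  f @ \oo --> 0 -> (forall n, nrm (u n - l) <= f n) -> ncvg nrm u l.
Proof.
move=> f0 hf; apply: (squeeze_cvgr _ (cvg_cst 0) f0).
by apply: nearW => n; rewrite nrm_ge0 hf.
Qed.

Lemma ncvg_unique u l1 l2 : ncvg nrm u l1 -> ncvg nrm u l2 -> l1 = l2.
Proof.
move=> h1 h2; apply/eqP; rewrite -subr_eq0; apply/eqP/(ban_eq0 hA).
have f0 : (fun n => nrm (u n - l1) + nrm (u n - l2)) @ \oo --> (0 : R).
  by rewrite -[0 : R]addr0; apply: cvgD.
have : (fun _ => nrm (l1 - l2)) @ \oo --> (0 : R).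
  apply: (squeeze_cvgr _ (cvg_cst 0) f0); apply: nearW => n /=.
  rewrite nrm_ge0 -(nrmN (u n - l1)).
  have -> : l1 - l2 = - (u n - l1) + (u n - l2) by ring.
  exact: nrmD.
exact: norm_cvg_unique (cvg_cst _).
Qed.

Lemma ncvg_cst l : ncvg nrm (fun _ => l) l.
Proof.
by apply: (@ncvg_le _ _ (fun _ => 0)) => [|n]; [exact: cvg_cst | rewrite subrr nrm0].
Qed.

Lemma ncvg_add u v l m : ncvg nrm u l -> ncvg nrm v m ->
  ncvg nrm (fun n => u n + v n) (l + m).
Proof.
move=> hu hv; apply: (@ncvg_le _ _ (fun n => nrm (u n - l) + nrm (v n - m))).
  by rewrite -[0 : R]addr0; apply: cvgD.
move=> n; have -> : u n + v n - (l + m) = (u n - l) + (v n - m) by ring.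
exact: nrmD.
Qed.

Lemma ncvg_mul u v l m : ncvg nrm u l -> ncvg nrm v m ->
  ncvg nrm (fun n => u n * v n) (l * m).
Proof.
move=> hu hv; pose f n := nrm (u n - l); pose g n := nrm (v n - m).
apply: (@ncvg_le _ _ (fun n => f n * g n + f n * nrm m + nrm l * g n)).
  rewrite -[0 : R](addr0 0) -{1}[0 : R](addr0 0).
  apply: cvgD; first apply: cvgD.
  - by rewrite -[0 : R](mulr0 0); apply: cvgM.
  - by rewrite -[0 : R](mul0r (nrm m)); apply: cvgMl.
  - by rewrite -[0 : R](mulr0 (nrm l)); apply: cvgMr.
move=> n; have -> : u n * v n - l * m =
    (u n - l) * (v n - m) + (u n - l) * m + l * (v n - m) by ring.
apply: le_trans (nrmD _ _) (lerD _ (nrmM _ _)).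
exact: le_trans (nrmD _ _) (lerD (nrmM _ _) (nrmM _ _)).
Qed.

Lemma ncvgZ (c : R[i]) u l : ncvg nrm u l -> ncvg nrm (fun n => c *: u n) (c *: l).
Proof.
move=> hu; apply: (@ncvg_le _ _ (fun n => cmod c * nrm (u n - l))).
  by rewrite -[0 : R](mulr0 (cmod c)); apply: cvgMr.
by move=> n; rewrite -scalerBr nrmZ.
Qed.

Lemma ncvg_subseq u l (f : nat -> nat) : (forall n, (n <= f n)%N) ->
  ncvg nrm u l -> ncvg nrm (fun n => u (f n)) l.
Proof.
move=> hf /cvgrPdist_lt hu; apply/cvgrPdist_lt => e /hu [N _ HN].
by exists N => // n /= Nn; apply: HN; apply: leq_trans Nn (hf n).
Qed.

Lemma ncvg_scalar1 (s : nat -> R[i]) (c : R[i]) :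
  (fun n => complex.Re (s n)) @ \oo --> complex.Re c ->
  (fun n => complex.Im (s n)) @ \oo --> complex.Im c ->
  ncvg nrm (fun n => s n *: 1) (c *: 1).
Proof.
have dist0 (w : nat -> R) (r : R) : w @ \oo --> r -> (fun n => `|w n - r|) @ \oo --> 0.
  by move=> /subr_cvg0 /cvg_norm; rewrite normr0.
move=> /dist0 hre /dist0 him.
apply: (@ncvg_le _ _ (fun n => (`|complex.Re (s n) - complex.Re c| +
                                `|complex.Im (s n) - complex.Im c|) * nrm 1)).
  by rewrite -(mul0r (nrm 1)) -[0 : R]addr0; apply: cvgMl; apply: cvgD.
move=> n; rewrite -scalerBl nrmZ; apply: ler_wpM2r; first exact: nrm_ge0.
by apply: le_trans (cmod_le_ReIm _) _; case: (s n) => ? ?; case: {hre him} c.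
Qed.

Lemma nrm_series_sub_le (t : nat -> A) (g : nat -> R) m n : (n <= m)%N ->
  (forall k, nrm (t k) <= g k) ->
  nrm (series t m - series t n) <= series g m - series g n.
Proof.
move=> nm ht; rewrite !sub_series_geq //.
by apply: le_trans (nrm_sum _ _ _) _; apply: ler_sum => k _.
Qed.

Lemma ncvg_series_le (t : nat -> A) (g : nat -> R) :
  (forall k, nrm (t k) <= g k) -> cvgn (series g) ->
  exists l, ncvg nrm (series t) l.
Proof.
move=> ht /cvg_ex[L /cvgrPdist_lt hL]; apply: (ban_complete hA) => e e0.
have [N _ HN] := hL (e / 2) (divr_gt0 e0 (ltr0Sn _ _)).
exists N; suff key m n : (N <= n)%N -> (n <= m)%N -> nrm (series t m - series t n) < e.
  move=> m n Nm Nn; have [nm|mn] := leqP n m; first exact: key.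
  by rewrite -nrmN opprB; apply: key => //; apply: ltnW.
move=> Nn nm; apply: le_lt_trans (nrm_series_sub_le nm ht) _.
have -> : series g m - series g n = (L - series g n) - (L - series g m) by ring.
apply: le_lt_trans (ler_norm _) _; apply: le_lt_trans (ler_normB _ _) _.
by rewrite [e]splitr ltrD // HN //; apply: leq_trans nm.
Qed.

Definition expA (z : A) : A := xget 0 [set l | ncvg nrm (series (exp_term z)) l].

Lemma exp_term_le z k : nrm (exp_term z k) <= nrm 1 * exp_coeff (nrm z) k.
Proof.
rewrite /exp_term nrmZ cmod_natV.
rewrite [leRHS](_ : _ = k`!%:R^-1 * (nrm 1 * nrm z ^+ k)); last first.
  by rewrite /exp_coeff /=; ring.
by apply: ler_wpM2l; rewrite ?invr_ge0 ?ler0n ?nrmX.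
Qed.

Lemma expA_cvg z : ncvg nrm (series (exp_term z)) (expA z).
Proof.
apply: (@xgetPex _ 0 [set l | ncvg nrm (series (exp_term z)) l]).
apply: (@ncvg_series_le _ (nrm 1 *: exp_coeff (nrm z))); first exact: exp_term_le.
exact/is_cvg_seriesZ/is_cvg_series_exp_coeff.
Qed.

Lemma expA_unique z l : ncvg nrm (series (exp_term z)) l -> expA z = l.
Proof. exact: ncvg_unique (expA_cvg z). Qed.

Lemma nrm_exp_series_mul_sub_le a b N :
  nrm (series (exp_term b) N * series (exp_term a) N - series (exp_term (a + b)) N)
  <= nrm 1 ^+ 2 * (series (exp_term (nrm b : R^o)) N * series (exp_term (nrm a : R^o)) N
                   - series (exp_term (nrm a + nrm b : R^o)) N).
Proof.
rewrite !exp_series_mul_sub mulr_sumr; apply: le_trans (nrm_sum _ _ _) _.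
apply: ler_sum => i _; rewrite mulr_sumr; apply: le_trans (nrm_sum _ _ _) _.
apply: ler_sum => j _; rewrite nrmZ cmodM !cmod_natV.
have fact_ge0 k : 0 <= (k`!%:R^-1 : R) by rewrite invr_ge0 ler0n.
apply: le_trans (ler_wpM2l (mulr_ge0 (fact_ge0 i) (fact_ge0 j)) (nrmM _ _)) _.
apply: le_trans (ler_wpM2l (mulr_ge0 (fact_ge0 i) (fact_ge0 j))
  (ler_pM (nrm_ge0 _) (nrm_ge0 _) (nrmX a j) (nrmX b i))) _.
rewrite [leRHS](_ : _ = (i`!%:R^-1 * j`!%:R^-1) *
                          (nrm 1 * nrm a ^+ j * (nrm 1 * nrm b ^+ i))) //.
by rewrite [in LHS]/GRing.scale /=; ring.
Qed.

Lemma exp_series_mul_sub_cvg0 (a b : R) :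
  (fun N => series (exp_term (b : R^o)) N * series (exp_term (a : R^o)) N
            - series (exp_term (a + b : R^o)) N) @ \oo --> 0.
Proof.
have exp_cvg r : series (exp_term (r : R^o)) @ \oo --> expR r.
  have -> : exp_term (r : R^o) = exp_coeff r.
    by apply/funext => k; rewrite /exp_term /exp_coeff /= mulrC.
  exact/cvgP/is_cvg_series_exp_coeff.
rewrite -(subrr (expR (a + b))) {1}expRD mulrC.
by apply: cvgB; [apply: cvgM|]; apply: exp_cvg.
Qed.

Lemma expAD a b : expA (a + b) = expA a * expA b.
Proof.
apply: expA_unique; rewrite [expA a * _]mulrC.
pose P N := series (exp_term b) N * series (exp_term a) N.
pose Q N := series (exp_term (nrm b : R^o)) N * series (exp_term (nrm a : R^o)) N
            - series (exp_term (nrm a + nrm b : R^o)) N.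
apply: (@ncvg_le _ _ (fun N => nrm (P N - expA b * expA a) + nrm 1 ^+ 2 * Q N)).
  rewrite -[0 : R](addr0 0); apply: cvgD.
    exact: ncvg_mul (expA_cvg b) (expA_cvg a).
  by rewrite -(mulr0 (nrm 1 ^+ 2)); apply: cvgMr; apply: exp_series_mul_sub_cvg0.
move=> N; have -> : series (exp_term (a + b)) N - expA b * expA a =
    (P N - expA b * expA a) - (P N - series (exp_term (a + b)) N) by ring.
by apply: le_trans (nrmD _ _) _; rewrite nrmN lerD2l nrm_exp_series_mul_sub_le.
Qed.

Lemma series_exp_term_scalar (c : R[i]) n :
  series (exp_term (c *: (1 : A))) n = (\sum_(0 <= k < n) k`!%:R^-1 * c ^+ k) *: 1.
Proof.
rewrite /series /= scaler_suml; apply: eq_bigr => k _.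
by rewrite /exp_term exprZn expr1n scalerA.
Qed.

Lemma expA_real (r : R) : expA ((r%:C)%C *: 1) = ((expR r)%:C)%C *: 1.
Proof.
apply: expA_unique.
have -> : series (exp_term ((r%:C)%C *: (1 : A))) =
    (fun n => ((series (exp_coeff r) n)%:C)%C *: 1).
  apply/funext => n; rewrite series_exp_term_scalar /series /= rmorph_sum.
  congr (_ *: _); apply: eq_bigr => k _.
  by rewrite /exp_coeff /= rmorphM rmorphXn fmorphV rmorph_nat mulrC.
apply: ncvg_scalar1; last exact: cvg_cst.
exact/cvgP/is_cvg_series_exp_coeff.
Qed.

Lemma expA_iR (r : R) : expA (('i%C * (r%:C)%C) *: 1) = (cos r +i* sin r)%C *: 1.
Proof.
apply: expA_unique.
have -> : series (exp_term (('i%C * (r%:C)%C) *: (1 : A))) =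
    (fun n => (((series (cos_coeff r) n)%:C)%C +
               'i%C * ((series (sin_coeff r) n)%:C)%C) *: 1).
  apply/funext => n; rewrite series_exp_term_scalar; congr (_ *: _).
  rewrite /series /= !rmorph_sum mulr_sumr -big_split /=.
  by apply: eq_bigr => k _; rewrite exp_coeff_i.
apply: ncvg_scalar1 => /=.
  under eq_fun do simpc.
  by rewrite unlock; apply/cvgP; exact: is_cvg_series_cos_coeff.
under eq_fun do simpc.
by rewrite unlock; apply/cvgP; exact: is_cvg_series_sin_coeff.
Qed.

Lemma expA_scalar (c : R[i]) : expA (c *: 1) = cexp c *: 1.
Proof.
case: c => a b; have -> : (a +i* b)%C = (a%:C)%C + 'i%C * (b%:C)%C by simpc.
rewrite scalerDl expAD expA_real expA_iR -scalerAl mul1r scalerA.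
by rewrite /cexp; congr ((_ * _) *: _); simpc.
Qed.

Lemma expA_expand z : exists w, expA z = 1 + z + z ^+ 2 * w.
Proof.
pose t k := (k.+2`!%:R^-1 : R[i]) *: z ^+ k.
have t_le k : nrm (t k) <= (nrm 1 *: exp_coeff (nrm z)) k.
  apply: le_trans (exp_term_le z k); rewrite /t /exp_term !nrmZ !cmod_natV.
  apply: ler_wpM2r; first exact: nrm_ge0.
  by rewrite lef_pV2 ?posrE ?ltr0n ?fact_gt0 // ler_nat leq_fact // leqW.
have [w hw] := ncvg_series_le t_le (is_cvg_seriesZ (is_cvg_series_exp_coeff _)).
exists w; apply: (ncvg_unique (u := fun N => series (exp_term z) N.+2)).
  exact: ncvg_subseq (fun n => leqW (leqnSn n)) (expA_cvg z).
have -> : (fun N => series (exp_term z) N.+2) = (fun N => 1 + z + z ^+ 2 * series t N).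
  apply/funext => N; elim: N => [|N ih].
    rewrite !seriesSr /series /= !big_geq // add0r mulr0 addr0.
    by rewrite /exp_term expr0 expr1 fact0 invr1 !scale1r.
  by rewrite seriesSr ih seriesSr mulrDr addrA /exp_term /t -scalerAr -exprD add2n.
exact: ncvg_add (ncvg_cst _) (ncvg_mul (ncvg_cst _) hw).
Qed.

Definition cos_term (z : A) (n : nat) : A :=
  (((-1) ^+ n) / ((2 * n)`!)%:R : R[i]) *: z ^+ (2 * n).

Lemma cos_series_expE (z : A) N :
  series (cos_term z) N =
  2^-1 *: (series (exp_term ('i%C *: z)) N.*2 + series (exp_term (- ('i%C *: z))) N.*2).
Proof.
elim: N => [|N ih]; first by rewrite /series /= !big_geq // addr0 scaler0.
rewrite seriesSr ih doubleS !seriesSr !exp_termN.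
set S1 := series _ _; set S2 := series _ _.
have -> : S1 + exp_term ('i%C *: z) N.*2 + exp_term ('i%C *: z) N.*2.+1 +
    (S2 + (-1) ^+ N.*2 *: exp_term ('i%C *: z) N.*2 +
          (-1) ^+ N.*2.+1 *: exp_term ('i%C *: z) N.*2.+1) =
    (S1 + S2) + 2%:R *: exp_term ('i%C *: z) N.*2.
  have even1 : ((-1) ^+ N.*2 : R[i]) = 1 by rewrite -mul2n exprM sqrrN !expr1n.
  by rewrite exprS even1 mulr1 scale1r scaleN1r scaler_nat; ring.
rewrite [RHS]scalerDr scalerA mulVf ?pnatr_eq0 // scale1r; congr (_ + _).
rewrite /exp_term exprZn scalerA -mul2n [('i%C ^+ _)]exprM sqr_i.
by congr (_ *: _); rewrite mulrC.
Qed.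

Lemma cosA_expA z : cosA nrm z = 2^-1 *: (expA ('i%C *: z) + expA (- ('i%C *: z))).
Proof.
have double n : (n <= n.*2)%N by rewrite -addnn leq_addr.
have cos_cvg : ncvg nrm (series (cos_term z))
    (2^-1 *: (expA ('i%C *: z) + expA (- ('i%C *: z)))).
  rewrite (funext (cos_series_expE z)); apply: ncvgZ.
  by apply: ncvg_add; apply: ncvg_subseq double (expA_cvg _).
by apply: xget_unique => [|l hl]; [exact: cos_cvg | exact: ncvg_unique hl cos_cvg].
Qed.

Definition twoi_sinA (z : A) : A := expA ('i%C *: z) - expA (- ('i%C *: z)).

Lemma cosA_addB a b :
  cosA nrm (a + b) - cosA nrm (a - b) = 2^-1 *: (twoi_sinA a * twoi_sinA b).
Proof.
rewrite !cosA_expA -scalerBr /twoi_sinA; congr (_ *: _).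
by rewrite scalerDr scalerBr opprD opprB !expAD; ring.
Qed.

Lemma twoi_sinA_expand z : exists w, twoi_sinA z = z * ((2 * 'i%C)%:A + z * w).
Proof.
have [w1 h1] := expA_expand ('i%C *: z); have [w2 h2] := expA_expand (- ('i%C *: z)).
exists ('i%C%:A * 'i%C%:A * (w1 - w2)).
by rewrite /twoi_sinA h1 h2 -(mulr_algl 'i%C z) mulr_natl -scalerMnl; ring.
Qed.

Lemma quasinilpotent_le_geometric x e : quasinilpotent nrm x -> 0 < e ->
  exists C, forall k, nrm (x ^+ k) <= C * e ^+ k.
Proof.
move=> /cvgrPdist_lt qx e0; have [N _ HN] := qx e e0.
pose F k := nrm (x ^+ k) / e ^+ k.
have F_ge0 k : 0 <= F k by rewrite divr_ge0 ?nrm_ge0 ?exprn_ge0 // ltW.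
exists (1 + \sum_(k < N.+1) F k) => k; have ek : 0 < e ^+ k by rewrite exprn_gt0.
have [kN|Nk] := ltnP k N.+1.
  rewrite -ler_pdivrMr // -/(F k) (bigD1 (Ordinal kN)) //= addrCA lerDl.
  by rewrite addr_ge0 // sumr_ge0.
have k0 : k != 0%N by rewrite -lt0n; apply: leq_trans Nk.
set b := powR (nrm (x ^+ k)) k%:R^-1 in HN.
have b_ge0 : 0 <= b by rewrite powR_ge0.
have b_lt : b < e.
  by have := HN k (ltnW Nk); rewrite sub0r normrN ger0_norm.
have -> : nrm (x ^+ k) = b ^+ k.
  rewrite /b -powR_mulrn ?powR_ge0 // -powRrM mulVf ?powRr1 ?nrm_ge0 //.
  by rewrite pnatr_eq0.
apply: le_trans (lerXn2r k _ _ (ltW b_lt)) _; rewrite ?nnegrE ?(ltW e0) //.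
by rewrite ler_peMl ?(ltW ek) // lerDl; apply: sumr_ge0.
Qed.

Definition in_ideal2 (x y z : A) : Prop := exists a b, z = x * a + y * b.

Lemma in_ideal2D x y z1 z2 :
  in_ideal2 x y z1 -> in_ideal2 x y z2 -> in_ideal2 x y (z1 + z2).
Proof. by move=> [a1 [b1 ->]] [a2 [b2 ->]]; exists (a1 + a2), (b1 + b2); ring. Qed.

Lemma in_ideal2Mr x y z w : in_ideal2 x y z -> in_ideal2 x y (z * w).
Proof. by move=> [a [b ->]]; exists (a * w), (b * w); ring. Qed.

Lemma in_ideal2_lin x y (c1 c2 : R[i]) : in_ideal2 x y (c1 *: x + c2 *: y).
Proof. by exists c1%:A, c2%:A; rewrite !mulr_algr. Qed.

Lemma in_ideal2_le_geometric x y a b e :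
  quasinilpotent nrm x -> quasinilpotent nrm y -> 0 < e ->
  exists K, forall n, nrm ((x * a + y * b) ^+ n) <= K * (e * nrm a + e * nrm b) ^+ n.
Proof.
move=> qx qy e0.
have [Cx hx] := quasinilpotent_le_geometric qx e0.
have [Cy hy] := quasinilpotent_le_geometric qy e0.
exists (Cx * Cy * nrm 1 ^+ 2) => n.
rewrite exprDn [in leRHS]exprDn mulr_sumr; apply: le_trans (nrm_sum _ _ _) _.
apply: ler_sum => i _; apply: le_trans (nrmMn _ _) _.
rewrite mulrnAr lerMn2r; apply/orP; right.
have -> : (x * a) ^+ (n - i) * (y * b) ^+ i =
    (x ^+ (n - i) * y ^+ i) * (a ^+ (n - i) * b ^+ i) by rewrite !exprMn; ring.
apply: le_trans (nrmM _ _) _.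
apply: le_trans (ler_pM (nrm_ge0 _) (nrm_ge0 _)
  (le_trans (nrmM _ _) (ler_pM (nrm_ge0 _) (nrm_ge0 _) (hx _) (hy _)))
  (le_trans (nrmM _ _) (ler_pM (nrm_ge0 _) (nrm_ge0 _) (nrmX _ _) (nrmX _ _)))) _.
by rewrite !exprMn le_eqVlt; apply/orP; left; apply/eqP; ring.
Qed.

Lemma in_ideal2_fixed_eq0 x y d z : quasinilpotent nrm x -> quasinilpotent nrm y ->
  in_ideal2 x y z -> d = d * z -> d = 0.
Proof.
move=> qx qy [a [b ->]] hd.
have d_pow n : d = d * (x * a + y * b) ^+ n.
  by elim: n => [|n ih]; rewrite ?expr0 ?mulr1 // exprSr mulrA -ih.
have ab_gt0 : 0 < nrm a + nrm b + 1 by rewrite ltr_wpDl // addr_ge0 ?nrm_ge0.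
pose e := (2 * (nrm a + nrm b + 1))^-1.
have e0 : 0 < e by rewrite invr_gt0 mulr_gt0.
have [K hK] := in_ideal2_le_geometric a b qx qy e0.
have K0 : 0 <= K by have := hK 0%N; rewrite !expr0 mulr1; apply: le_trans (nrm_ge0 _).
have r_ge0 : 0 <= e * nrm a + e * nrm b.
  by rewrite -mulrDr mulr_ge0 ?addr_ge0 ?nrm_ge0 ?ltW.
have r_le : e * nrm a + e * nrm b <= 2^-1.
  have he : e * (2 * (nrm a + nrm b + 1)) = 1 by rewrite mulVf // gt_eqF // mulr_gt0.
  have := nrm_ge0 a; have := nrm_ge0 b; nra.
apply/(ban_eq0 hA)/(le_mul_halfX_eq0 (nrm_ge0 d)) => n.
rewrite {1}(d_pow n); apply: le_trans (nrmM _ _) (ler_wpM2l (nrm_ge0 _) _).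
apply: le_trans (hK n) (ler_wpM2l K0 (lerXn2r _ _ _ r_le)).
  by rewrite nnegrE.
by rewrite nnegrE invr_ge0.
Qed.

Lemma in_ideal2_mul_eq0 x y d (c : R[i]) z :
  quasinilpotent nrm x -> quasinilpotent nrm y ->
  in_ideal2 x y z -> c != 0 -> d * (c%:A + z) = 0 -> d = 0.
Proof.
move=> qx qy hz c0 hd.
apply: (in_ideal2_fixed_eq0 qx qy (in_ideal2Mr (- c^-1)%:A hz)).
have dc : c *: d = - (d * z).
  by rewrite -mulr_algr; apply/eqP; rewrite -addr_eq0 -mulrDr hd.
by rewrite mulrA mulr_algr scaleNr -scalerN -dc scalerA mulVf // scale1r.
Qed.

Lemma expA_scale_expand (c : R[i]) z : exists w, expA (c *: z) = 1 + z * w.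
Proof.
have [w ->] := expA_expand (c *: z).
by exists (c%:A + z * (c%:A * c%:A * w)); rewrite -(mulr_algl c z); ring.
Qed.

Lemma twoi_sinA_scalarD (c : R[i]) z :
  twoi_sinA (c%:A + z) =
  cexp ('i%C * c) *: expA ('i%C *: z) - cexp (- ('i%C * c)) *: expA (- ('i%C *: z)).
Proof.
rewrite /twoi_sinA scalerDr opprD !expAD scalerA -scaleNr !expA_scalar.
by rewrite -!scalerAl !mul1r.
Qed.

Lemma twoi_sinA_scalarD_expand (c : R[i]) z :
  exists w, twoi_sinA (c%:A + z) = (cexp ('i%C * c) - cexp (- ('i%C * c)))%:A + z * w.
Proof.
have [w1 h1] := expA_scale_expand 'i%C z.
have [w2 h2] := expA_scale_expand (- 'i%C) z.
exists ((cexp ('i%C * c))%:A * w1 - (cexp (- ('i%C * c)))%:A * w2).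
rewrite twoi_sinA_scalarD h1 -(scaleNr 'i%C z) h2 scalerBl.
by rewrite -(mulr_algl _ (1 + z * w1)) -(mulr_algl _ (1 + z * w2)); ring.
Qed.

Lemma twoi_sinA_mul_eq0 a b :
  cosA nrm (a + b) = cosA nrm (a - b) -> twoi_sinA a * twoi_sinA b = 0.
Proof.
move=> /eqP; rewrite -subr_eq0 cosA_addB scaler_eq0 invr_eq0 pnatr_eq0 /=.
by move/eqP.
Qed.

Lemma quasinilpotent_cosA_inj x y (l : R[i]) :
  quasinilpotent nrm x -> quasinilpotent nrm y ->
  ~ (exists k : int, l = ((pi * k%:~R : R)%:C)%C) ->
  cosA nrm (l%:A + x) = cosA nrm (l%:A + y) -> x = y.
Proof.
move=> qx qy l_npi; have [ex ey] := half_sum_diff x y.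
set p := 2^-1 *: (x + y) in ex ey *; set q := 2^-1 *: (x - y) in ex ey *.
have hp : in_ideal2 x y p by rewrite /p scalerDr; apply: in_ideal2_lin.
have hq : in_ideal2 x y q by rewrite /q scalerBr -scaleNr; apply: in_ideal2_lin.
rewrite ex ey !addrA => /twoi_sinA_mul_eq0.
have [w1 ->] := twoi_sinA_scalarD_expand l p; have [w2 ->] := twoi_sinA_expand q.
set s := cexp ('i%C * l) - cexp (- ('i%C * l)); set t := 2 * 'i%C => prod0.
have s0 : s != 0 by rewrite subr_eq0; apply/eqP => /cexp_iN_eq /l_npi.
suff -> : q = 0 by rewrite addr0 subr0.
apply: (in_ideal2_mul_eq0 (c := s * t) qx qy
  (z := p * (w1 * (t%:A + q * w2)) + q * (s%:A * w2))).
- exact: in_ideal2D (in_ideal2Mr _ hp) (in_ideal2Mr _ hq).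
- exact: mulf_neq0 s0 (twoi_neq0 R).
- by rewrite -prod0 alg_mul; ring.
Qed.

Lemma quasinilpotent_cosA_sqr x y (k : int) :
  quasinilpotent nrm x -> quasinilpotent nrm y ->
  cosA nrm (((pi * k%:~R : R)%:C)%C%:A + x) =
    cosA nrm (((pi * k%:~R : R)%:C)%C%:A + y) ->
  x ^+ 2 = y ^+ 2.
Proof.
set l := ((pi * k%:~R : R)%:C)%C.
move=> qx qy; have [ex ey] := half_sum_diff x y.
set p := 2^-1 *: (x + y) in ex ey *; set q := 2^-1 *: (x - y) in ex ey *.
have hp : in_ideal2 x y p by rewrite /p scalerDr; apply: in_ideal2_lin.
have hq : in_ideal2 x y q by rewrite /q scalerBr -scaleNr; apply: in_ideal2_lin.
rewrite ex ey !addrA => /twoi_sinA_mul_eq0.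
have eN : cexp ('i%C * l) = cexp (- ('i%C * l)) by apply/cexp_iN_eq; exists k.
rewrite twoi_sinA_scalarD -eN -scalerBr -/(twoi_sinA p) -scalerAl.
move=> /eqP; rewrite scaler_eq0 (negbTE (cexp_neq0 _)) /= => /eqP.
have [w1 ->] := twoi_sinA_expand p; have [w2 ->] := twoi_sinA_expand q.
set t := 2 * 'i%C => prod0.
have pq0 : p * q = 0.
  apply: (in_ideal2_mul_eq0 (c := t * t) qx qy
    (z := p * (w1 * (t%:A + q * w2)) + q * (t%:A * w2))).
  - exact: in_ideal2D (in_ideal2Mr _ hp) (in_ideal2Mr _ hq).
  - exact: mulf_neq0 (twoi_neq0 R) (twoi_neq0 R).
  - by rewrite -prod0 alg_mul; ring.
apply/eqP; rewrite -subr_eq0.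
have -> : (p + q) ^+ 2 - (p - q) ^+ 2 = 4%:R * (p * q) by ring.
by rewrite pq0 mulr0.
Qed.

End BanachAlgebra.

Theorem lemma2p2 (R : realType) (A : comAlgType R[i]) (nrm : A -> R)
    (hA : banach_algebra_norm nrm) (x y : A) (lambda : R[i]) :
  quasinilpotent nrm x -> quasinilpotent nrm y ->
  ((~ (exists k : int, lambda = ((pi * k%:~R : R)%:C)%C)) ->
     cosA nrm (lambda%:A + x) = cosA nrm (lambda%:A + y) -> x = y) /\
  ((exists k : int, lambda = ((pi * k%:~R : R)%:C)%C) ->
     cosA nrm (lambda%:A + x) = cosA nrm (lambda%:A + y) -> x ^+ 2 = y ^+ 2).
Proof.
move=> qx qy; split; first exact: quasinilpotent_cosA_inj.
by move=> [k ->]; exact: quasinilpotent_cosA_sqr.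
Qed.
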